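(* Let $L>0$, $\mathbb{T}=\mathbb{R}/L\mathbb{Z}$, let $(\gamma_k)_{k\in\mathbb{Z}}$ be positive reals, and let $u$ be the solution of the linear equation \[ u_t-u_{txx}+u_x+\mathscr{L}_\gamma(u)=0,\quad x\in\mathbb{T},\qquad u(0)=u_0. \] Assume there exist positive constants $\alpha,\beta,C$ such that (i) $|\hat{u}_{0,k}|^2\le C\gamma_k^{2\delta}$ for all $k$, where $\delta=\alpha+\beta$; (ii) $\sum_{k\in\mathbb{Z}}(1+k^2)^{2\alpha+1}\gamma_k^{2\beta}<+\infty$. Then for all $t>0$, \[ |u(t)|_{H^1}^2\le Ce^{-2\alpha}\Big(\frac{\alpha}{t}\Big)^{2\alpha}\sum_{k\in\mathbb{Z}}(1+k^2)^{2\alpha+1}\gamma_k^{2\beta}=O\Big(\frac{1}{t^{2\alpha}}\Big). \]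
   Context: For $u\in L^2(\mathbb{T})$, $\hat u_k$ is its $k$-th Fourier coefficient and $\hat u_{0,k}$ those of $u_0$; in symbols $k$ stands for the frequency $2\pi k/L$. $\mathscr{L}_\gamma$ is the Fourier multiplier $\widehat{\mathscr{L}_\gamma(u)}_k=\gamma_k\hat u_k$. The $H^1$ norm is $|u|_{H^1}^2=\sum_k(1+k^2)|\hat u_k|^2$. The solution is given by $\hat u_k(t)=e^{-\frac{\gamma_k+ik}{1+k^2}t}\hat u_k(0)$. *)

From Stdlib Require Import Reals ZArith.
From Coquelicot Require Import Coquelicot.
Open Scope R_scope.

(* Sums over Z of a family f : Z -> R, via the enumeration
   0, -1, 1, -2, 2, ... grouped as f n + f (-(n+1)).
   For the nonnegative families used below this is exactly
   summability over Z and the value of the sum over Z. *)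
Definition zsplit (f : Z -> R) (n : nat) : R :=
  f (Z.of_nat n) + f (- Z.of_nat (S n))%Z.
Definition ex_zseries (f : Z -> R) : Prop := ex_series (zsplit f).
Definition zSeries (f : Z -> R) : R := Series (zsplit f).

Definition freq (L : R) (k : Z) : R := 2 * PI * IZR k / L.

Definition cexp (z : C) : C := (exp (fst z) * cos (snd z), exp (fst z) * sin (snd z)).

(* Fourier coefficients of the solution of
     u_t - u_txx + u_x + L_gamma(u) = 0,  u(0) = u0,
   given the coefficients c of u0:
     hat u_k(t) = exp(-(gamma_k + i k)/(1+k^2) t) hat u_{0,k}  (k := 2 pi k / L). *)
Definition sol_coef (L : R) (gamma : Z -> R) (c : Z -> C) (t : R) (k : Z) : C :=
  Cmult (cexp ((- (gamma k) * t / (1 + (freq L k)^2),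
                - (freq L k) * t / (1 + (freq L k)^2)))) (c k).

Definition H1_term (L : R) (v : Z -> C) (k : Z) : R :=
  (1 + (freq L k)^2) * (Cmod (v k))^2.

From Stdlib Require Import Reals ZArith Lra.
From Coquelicot Require Import Coquelicot.
Open Scope R_scope.

(* The k-th mode is damped by exp(-gamma_k t / (1+k^2)), and
   x^a exp(-x y) <= (a / (e y))^a for x, y > 0.  Applied with x = gamma_k this
   trades the factor gamma_k^(2 alpha) from (i) for
   (alpha (1+k^2) / (e t))^(2 alpha), so each term of |u(t)|_{H^1}^2 is
   dominated by the corresponding term of the series (ii). *)

Lemma zsplit_scal (K : R) (f : Z -> R) (n : nat) :
  zsplit (fun k => K * f k) n = K * zsplit f n.
Proof. unfold zsplit; ring. Qed.

Lemma ex_zseries_le (f g : Z -> R) :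
  (forall k, 0 <= f k <= g k) -> ex_zseries g -> ex_zseries f.
Proof.
  intros Hfg Hg.
  apply (@ex_series_le R_AbsRing R_CompleteNormedModule _ (zsplit g)); [|exact Hg].
  intro n; change (norm ?x) with (Rabs x); unfold zsplit.
  pose proof (Hfg (Z.of_nat n)); pose proof (Hfg (- Z.of_nat (S n))%Z).
  rewrite Rabs_pos_eq; lra.
Qed.

Lemma zSeries_le (f g : Z -> R) :
  (forall k, 0 <= f k <= g k) -> ex_zseries g -> zSeries f <= zSeries g.
Proof.
  intros Hfg Hg; apply Series_le; [|exact Hg].
  intro n; unfold zsplit.
  pose proof (Hfg (Z.of_nat n)); pose proof (Hfg (- Z.of_nat (S n))%Z); lra.
Qed.

Lemma ex_zseries_scal (K : R) (f : Z -> R) :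
  ex_zseries f -> ex_zseries (fun k => K * f k).
Proof.
  intro Hf; unfold ex_zseries.
  apply (ex_series_ext (fun n => K * zsplit f n)).
  - intro n; now rewrite zsplit_scal.
  - exact (ex_series_scal_l K (zsplit f) Hf).
Qed.

Lemma zSeries_scal (K : R) (f : Z -> R) :
  zSeries (fun k => K * f k) = K * zSeries f.
Proof.
  unfold zSeries; rewrite <- Series_scal_l.
  apply Series_ext; apply zsplit_scal.
Qed.

Lemma exp_le_compat (x y : R) : x <= y -> exp x <= exp y.
Proof. intros [Hxy | ->]; [now left; apply exp_increasing | lra]. Qed.

(* The maximum of x^a exp(-x y) over x > 0 is attained at x = a / y. *)
Lemma Rpower_mul_exp_le (a x y : R) : 0 < a -> 0 < x -> 0 < y ->
  Rpower x a * exp (- (x * y)) <= Rpower (a / y) a * exp (- a).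
Proof.
  intros Ha Hx Hy; unfold Rpower; rewrite <- !exp_plus.
  apply exp_le_compat.
  pose proof (exp_ineq1_le (ln (x * y / a))) as Hln.
  rewrite exp_ln in Hln by (apply Rdiv_lt_0_compat; nra).
  rewrite ln_div, ln_mult in Hln by nra.
  rewrite ln_div by lra.
  assert (Hxy : x * y = a * (x * y / a)) by (field; lra).
  rewrite Hxy; nra.
Qed.

Lemma Cmod_cexp (x y : R) : Cmod (cexp (x, y)) = exp x.
Proof.
  unfold Cmod, cexp; simpl.
  replace ((exp x * cos y) * ((exp x * cos y) * 1) + (exp x * sin y) * ((exp x * sin y) * 1))
    with (Rsqr (exp x) * (Rsqr (sin y) + Rsqr (cos y))) by (unfold Rsqr; ring).
  rewrite sin2_cos2, Rmult_1_r; apply sqrt_Rsqr; left; apply exp_pos.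
Qed.

Lemma Cmod_sol_coef (L : R) (gamma : Z -> R) (c : Z -> C) (t : R) (k : Z) :
  Cmod (sol_coef L gamma c t k)
  = exp (- gamma k * t / (1 + freq L k ^ 2)) * Cmod (c k).
Proof. unfold sol_coef; now rewrite Cmod_mult, Cmod_cexp. Qed.

Lemma damped_Rpower_le (q g t a : R) : 0 < q -> 0 < g -> 0 < t -> 0 < a ->
  exp (- g * t / q) ^ 2 * Rpower g (2 * a)
  <= exp (- (2 * a)) * Rpower (a / t) (2 * a) * Rpower q (2 * a).
Proof.
  intros Hq Hg Ht Ha.
  assert (Hdamp : exp (- g * t / q) ^ 2 = exp (- (g * (2 * t / q)))).
  { rewrite <- Rsqr_pow2; unfold Rsqr; rewrite <- exp_plus; f_equal; field; lra. }
  assert (Hscale : 2 * a / (2 * t / q) = a / t * q) by (field; lra).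
  rewrite Hdamp, Rmult_comm.
  rewrite Rmult_assoc, (Rmult_comm (exp _)), Rpower_mult_distr, <- Hscale
    by (try apply Rdiv_lt_0_compat; lra).
  apply Rpower_mul_exp_le; try apply Rdiv_lt_0_compat; lra.
Qed.

Lemma H1_term_sol_coef_le (L : R) (gamma : Z -> R) (c : Z -> C)
  (alpha beta Cst t : R) (k : Z) :
  0 < gamma k -> 0 < alpha -> 0 < Cst -> 0 < t ->
  (Cmod (c k))^2 <= Cst * Rpower (gamma k) (2 * (alpha + beta)) ->
  H1_term L (sol_coef L gamma c t) k
  <= Cst * exp (- (2 * alpha)) * Rpower (alpha / t) (2 * alpha)
     * (Rpower (1 + (freq L k)^2) (2 * alpha + 1) * Rpower (gamma k) (2 * beta)).
Proof.
  intros Hg Ha HC Ht Hck.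
  unfold H1_term; rewrite Cmod_sol_coef, Rpow_mult_distr.
  set (q := 1 + freq L k ^ 2).
  assert (Hq : 0 < q) by (unfold q; nra).
  set (damp := exp (- gamma k * t / q) ^ 2).
  assert (Hdamp : 0 <= damp) by (unfold damp; apply pow2_ge_0).
  assert (Hbeta : 0 < Rpower (gamma k) (2 * beta)) by apply exp_pos.
  rewrite Rmult_plus_distr_l, Rpower_plus in Hck.
  rewrite Rpower_plus, Rpower_1 by exact Hq.
  apply Rle_trans with
    (q * Cst * Rpower (gamma k) (2 * beta) * (damp * Rpower (gamma k) (2 * alpha))).
  - replace (q * Cst * Rpower (gamma k) (2 * beta) * (damp * Rpower (gamma k) (2 * alpha)))
      with (q * damp * (Cst * (Rpower (gamma k) (2 * alpha) * Rpower (gamma k) (2 * beta))))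
      by ring.
    rewrite <- Rmult_assoc; apply Rmult_le_compat_l; [apply Rmult_le_pos; lra | exact Hck].
  - apply Rle_trans with (q * Cst * Rpower (gamma k) (2 * beta)
      * (exp (- (2 * alpha)) * Rpower (alpha / t) (2 * alpha) * Rpower q (2 * alpha))).
    + apply Rmult_le_compat_l; [apply Rmult_le_pos; [apply Rmult_le_pos|]; lra|].
      now apply damped_Rpower_le.
    + right; ring.
Qed.

Lemma H1_term_nonneg (L : R) (v : Z -> C) (k : Z) : 0 <= H1_term L v k.
Proof.
  unfold H1_term; apply Rmult_le_pos; [|apply pow2_ge_0].
  pose proof (pow2_ge_0 (freq L k)); lra.
Qed.

Theorem mainTheorem6 (L : R) (gamma : Z -> R) (c : Z -> C)
  (alpha beta Cst : R) :
  0 < L ->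
  (forall k : Z, 0 < gamma k) ->
  ex_zseries (fun k => (Cmod (c k))^2) ->
  0 < alpha -> 0 < beta -> 0 < Cst ->
  (forall k : Z, (Cmod (c k))^2 <= Cst * Rpower (gamma k) (2 * (alpha + beta))) ->
  ex_zseries (fun k => Rpower (1 + (freq L k)^2) (2 * alpha + 1)
                       * Rpower (gamma k) (2 * beta)) ->
  forall t : R, 0 < t ->
    ex_zseries (H1_term L (sol_coef L gamma c t)) /\
    zSeries (H1_term L (sol_coef L gamma c t))
      <= Cst * exp (- (2 * alpha)) * Rpower (alpha / t) (2 * alpha)
         * zSeries (fun k => Rpower (1 + (freq L k)^2) (2 * alpha + 1)
                             * Rpower (gamma k) (2 * beta)).
Proof.
  intros _ Hg _ Ha _ HC Hi Hii t Ht.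
  set (K := Cst * exp (- (2 * alpha)) * Rpower (alpha / t) (2 * alpha)).
  assert (Hbound : forall k, 0 <= H1_term L (sol_coef L gamma c t) k
    <= K * (Rpower (1 + (freq L k)^2) (2 * alpha + 1) * Rpower (gamma k) (2 * beta))).
  { intro k; split; [apply H1_term_nonneg|].
    now apply H1_term_sol_coef_le. }
  pose proof (ex_zseries_scal K _ Hii) as HKii.
  split.
  - exact (ex_zseries_le _ _ Hbound HKii).
  - rewrite <- zSeries_scal; exact (zSeries_le _ _ Hbound HKii).
Qed.
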